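(* Let $\rho:\{C,V\}^*\to\{C,V\}^*$ be the rhythmic syncope function. Then for every $i,j>0$ and every tier $\tau$ on $\{C,V\}$, the function $\rho$ is not $i,j$-input--output strictly local on tier $\tau$.
   Context: Strings: $\lambda$ is the empty string; $\rtimes$ is a left word-boundary symbol not in any alphabet considered. For $k\ge 0$ and a string $x$, $\mathrm{suff}^k(x)$ is the string consisting of the last $k$ symbols of $\rtimes^k x$. The longest common prefix of a set of strings $A$ is denoted $\mathrm{lcp}(A)$. Rhythmic syncope: every $x\in\{C,V\}^*$ can be written uniquely as $c_0Vc_1Vc_2\cdots Vc_n$ with $c_0,\dots,c_n\in C^*$; then $\rho(c_0Vc_1V\cdots Vc_n)=c_0v_1c_1v_2c_2\cdots v_nc_n$, where $v_m=V$ if $m$ is even and $v_m=\lambda$ if $m$ is odd. For $f:\Sigma^*\to\Gamma^*$ ($\Sigma,\Gamma$ finite alphabets), $f^{\gets}(x):=\mathrm{lcp}(\{f(xy)\mid y\in\Sigma^*\})$, and for $x\in\Sigma^*$ the translation $f^{\to}_x:\Sigma^*\to\Gamma^*$ is defined by $f(xy)=f^{\gets}(x)f^{\to}_x(y)$. A tier on an alphabet $A$ is a homomorphism $\tau:A^*\to A^*$ such that for each $a\in A$, either $\tau(a)=a$ or $\tau(a)=\lambda$. Given $i,j>0$ and a tier $\tau$ on $\Sigma\cup\Gamma$, $f$ is $i,j$-input--output strictly local on tier $\tau$ ($i,j$-TIOSL) if for all $w,x\in\Sigma^*$: whenever $\mathrm{suff}^{i-1}(\tau(w))=\mathrm{suff}^{i-1}(\tau(x))$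 and $\mathrm{suff}^{j-1}(\tau(f^{\gets}(w)))=\mathrm{suff}^{j-1}(\tau(f^{\gets}(x)))$, we have $f^{\to}_w=f^{\to}_x$. *)

From Stdlib Require Import List Arith ClassicalEpsilon.
Import ListNotations.

Inductive sym : Type := C | V.

(* suff^k(x): the last k symbols of (rtimes^k x); the boundary symbol rtimes
   is represented by None, ordinary symbols by Some a. *)
Definition suff {A : Type} (k : nat) (x : list A) : list (option A) :=
  skipn (length x) (repeat None k ++ map Some x).

Definition is_prefix {A : Type} (p s : list A) : Prop := exists r, s = p ++ r.

Definition is_lcp {A : Type} (S : list A -> Prop) (p : list A) : Prop :=
  (forall s, S s -> is_prefix p s) /\
  (forall q, (forall s, S s -> is_prefix q s) -> length q <= length p).

(* lcp(S), chosen by (classical) description; it is unique when S is nonempty. *)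
Definition lcp {A : Type} (S : list A -> Prop) : list A :=
  epsilon (inhabits (@nil A)) (is_lcp S).

Definition f_left {S G : Type} (f : list S -> list G) (x : list S) : list G :=
  lcp (fun z => exists y, z = f (x ++ y)).

(* f^{->}_x, determined by f(xy) = f^{<-}(x) f^{->}_x(y) *)
Definition f_right {S G : Type} (f : list S -> list G) (x : list S) : list S -> list G :=
  fun y => skipn (length (f_left f x)) (f (x ++ y)).

Definition is_tier {A : Type} (tau : list A -> list A) : Prop :=
  (forall u v, tau (u ++ v) = tau u ++ tau v) /\
  (forall a : A, tau [a] = [a] \/ tau [a] = []).

Definition TIOSL {A : Type} (i j : nat) (tau : list A -> list A)
    (f : list A -> list A) : Prop :=
  forall w x : list A,
    suff (i - 1) (tau w) = suff (i - 1) (tau x) ->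
    suff (j - 1) (tau (f_left f w)) = suff (j - 1) (tau (f_left f x)) ->
    f_right f w = f_right f x.

(* Rhythmic syncope: delete the 1st, 3rd, 5th, ... occurrence of V.
   The flag b is true iff the next V is odd-numbered. *)
Fixpoint rho_aux (b : bool) (x : list sym) : list sym :=
  match x with
  | [] => []
  | C :: x' => C :: rho_aux b x'
  | V :: x' => if b then rho_aux false x' else V :: rho_aux true x'
  end.

Definition rho (x : list sym) : list sym := rho_aux true x.

From Stdlib Require Import List Arith Lia ClassicalEpsilon.
Import ListNotations.

(* Compare w = V^(2i) and x = V^(2i+1).  In both cases rho has committed to
   the output V^i, and a tier sees a run of V's or nothing at all, so every
   window of the definition agrees.  Yet one more V is deleted after w (it is
   the (2i+1)-st V) and kept after x: the translations differ on [V]. *)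

Lemma suff_repeat {A : Type} (a : A) (k n : nat) :
  k <= n -> suff k (repeat a n) = repeat (Some a) k.
Proof.
  intros Hkn. unfold suff.
  rewrite repeat_length, map_repeat, skipn_app, repeat_length.
  rewrite skipn_all2 by (rewrite repeat_length; lia).
  replace n with ((n - k) + k) at 2 by lia.
  rewrite repeat_app, skipn_app, repeat_length, Nat.sub_diag, skipn_O.
  rewrite skipn_all2 by (rewrite repeat_length; lia). reflexivity.
Qed.

Lemma is_prefix_unique {A : Type} (p q s : list A) :
  is_prefix p s -> is_prefix q s -> length p = length q -> p = q.
Proof.
  intros [r Hp] [r' Hq] Hlen.
  assert (E := f_equal (firstn (length p)) (eq_trans (eq_sym Hp) Hq)).
  rewrite firstn_app, firstn_all, Nat.sub_diag, firstn_O, app_nil_r in E.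
  rewrite Hlen, firstn_app, firstn_all, Nat.sub_diag, firstn_O, app_nil_r in E.
  exact E.
Qed.

Lemma lcp_least {A : Type} (S : list A -> Prop) (p : list A) :
  S p -> (forall s, S s -> is_prefix p s) -> lcp S = p.
Proof.
  intros Sp Hp.
  assert (Hlcp : is_lcp S p).
  { split; [exact Hp |].
    intros q Hq. destruct (Hq p Sp) as [r ->]. rewrite length_app. lia. }
  unfold lcp.
  destruct (epsilon_spec (inhabits (@nil A)) (is_lcp S) (ex_intro _ p Hlcp))
    as [He_pref He_max].
  apply (is_prefix_unique _ _ p); [apply He_pref, Sp | exists []; symmetry; apply app_nil_r |].
  apply Nat.le_antisymm; [apply (proj2 Hlcp), He_pref | apply He_max, Hp].
Qed.

Lemma f_left_eq {S G : Type} (f : list S -> list G) (x : list S) (p : list G) :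
  f x = p -> (forall y, is_prefix p (f (x ++ y))) -> f_left f x = p.
Proof.
  intros Hfx Hp. unfold f_left. apply lcp_least.
  - exists []. rewrite app_nil_r. symmetry. exact Hfx.
  - intros s [y ->]. apply Hp.
Qed.

Lemma tier_nil {A : Type} (tau : list A -> list A) : is_tier tau -> tau [] = [].
Proof.
  intros [Hhom _]. apply length_zero_iff_nil.
  assert (E := f_equal (@length A) (Hhom [] [])).
  rewrite length_app in E. simpl in E. lia.
Qed.

Lemma tier_suff_repeat {A : Type} (tau : list A -> list A) (a : A) (k m n : nat) :
  is_tier tau -> k <= m -> k <= n ->
  suff k (tau (repeat a m)) = suff k (tau (repeat a n)).
Proof.
  intros Htau Hkm Hkn.
  assert (Htau_nil := tier_nil tau Htau).
  destruct Htau as [Hhom Hletter].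
  assert (Hcons : forall l, tau (a :: l) = tau [a] ++ tau l)
    by (intro l; exact (Hhom [a] l)).
  destruct (Hletter a) as [Ha | Ha].
  - assert (Hrep : forall l, tau (repeat a l) = repeat a l).
    { induction l as [| l IH]; [exact Htau_nil |].
      simpl. rewrite Hcons, Ha, IH. reflexivity. }
    rewrite !Hrep, !suff_repeat by assumption. reflexivity.
  - assert (Hrep : forall l, tau (repeat a l) = []).
    { induction l as [| l IH]; [exact Htau_nil |].
      simpl. rewrite Hcons, Ha, IH. reflexivity. }
    rewrite !Hrep. reflexivity.
Qed.

Lemma rho_aux_VV (b : bool) (x : list sym) :
  rho_aux b (V :: V :: x) = V :: rho_aux b x.
Proof. destruct b; reflexivity. Qed.

Lemma rho_aux_repeat_even (b : bool) (m : nat) (y : list sym) :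
  rho_aux b (repeat V (2 * m) ++ y) = repeat V m ++ rho_aux b y.
Proof.
  induction m as [| m IH]; [reflexivity |].
  replace (2 * S m) with (S (S (2 * m))) by lia.
  change (rho_aux b (V :: V :: (repeat V (2 * m) ++ y)) = V :: repeat V m ++ rho_aux b y).
  rewrite rho_aux_VV, IH. reflexivity.
Qed.

Lemma rho_repeat_even (m : nat) (y : list sym) :
  rho (repeat V (2 * m) ++ y) = repeat V m ++ rho y.
Proof. apply rho_aux_repeat_even. Qed.

Lemma rho_repeat_odd (m : nat) (y : list sym) :
  rho (repeat V (S (2 * m)) ++ y) = repeat V m ++ rho_aux false y.
Proof. apply rho_aux_repeat_even. Qed.

Lemma f_left_rho_repeat_even (m : nat) : f_left rho (repeat V (2 * m)) = repeat V m.
Proof.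
  apply f_left_eq.
  - rewrite <- (app_nil_r (repeat V (2 * m))), rho_repeat_even. apply app_nil_r.
  - intro y. rewrite rho_repeat_even. eexists. reflexivity.
Qed.

Lemma f_left_rho_repeat_odd (m : nat) : f_left rho (repeat V (S (2 * m))) = repeat V m.
Proof.
  apply f_left_eq.
  - rewrite <- (app_nil_r (repeat V (S (2 * m)))), rho_repeat_odd. apply app_nil_r.
  - intro y. rewrite rho_repeat_odd. eexists. reflexivity.
Qed.

Lemma f_right_rho_repeat_even_V (m : nat) : f_right rho (repeat V (2 * m)) [V] = [].
Proof.
  unfold f_right.
  rewrite f_left_rho_repeat_even, rho_repeat_even, app_nil_r.
  apply skipn_all.
Qed.

Lemma f_right_rho_repeat_odd_V (m : nat) :
  f_right rho (repeat V (S (2 * m))) [V] = [V].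
Proof.
  unfold f_right.
  rewrite f_left_rho_repeat_odd, rho_repeat_odd, skipn_app, skipn_all,
    Nat.sub_diag.
  reflexivity.
Qed.

Theorem proposition10 :
  forall (i j : nat) (tau : list sym -> list sym),
    0 < i -> 0 < j -> is_tier tau -> ~ TIOSL i j tau rho.
Proof.
  intros i j tau _ _ Htau Hiosl.
  assert (Htrans : f_right rho (repeat V (2 * i)) = f_right rho (repeat V (S (2 * i)))).
  { apply Hiosl.
    - apply tier_suff_repeat; [exact Htau | lia | lia].
    - rewrite f_left_rho_repeat_even, f_left_rho_repeat_odd. reflexivity. }
  assert (E := f_equal (fun g => g [V]) Htrans). cbv beta in E.
  rewrite f_right_rho_repeat_even_V, f_right_rho_repeat_odd_V in E.
  discriminate E.
Qed.
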